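(* Let $G=(V,E)$ be a threshold graph. An edge $e\in E$ is threshold-safe (i.e., $G-e$ is a threshold graph) if and only if $e$ is neither the middle edge of an induced diamond nor a side edge of an induced paw in $G$.
   Context: A graph $G=(V,E)$ is threshold if there exist a labeling $\ell:V\to\mathbb{N}_0$ and $t\in\mathbb{N}_0$ such that $X\subseteq V$ is independent iff $\sum_{x\in X}\ell(x)\le t$. A diamond is $K_4$ minus an edge; its middle edge joins its two degree-3 vertices. A paw is the graph on $\{a,b,c,d\}$ with edges $ab,bc,cd,bd$; its side edges are $bc$ and $bd$. *)

From mathcomp Require Import all_boot.
Set Implicit Arguments. Unset Strict Implicit. Unset Printing Implicit Defensive.

Definition simple_graph (V : finType) (g : rel V) : Prop :=
  symmetric g /\ irreflexive g.

Definition independent (V : finType) (g : rel V) (X : {set V}) : bool :=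
  [forall x in X, forall y in X, ~~ g x y].

Definition threshold (V : finType) (g : rel V) : Prop :=
  exists (l : V -> nat) (t : nat),
    forall X : {set V}, independent g X <-> (\sum_(x in X) l x <= t).

Definition remove_edge (V : finType) (g : rel V) (u v : V) : rel V :=
  fun x y => g x y && ~~ (((x == u) && (y == v)) || ((x == v) && (y == u))).

Definition diamond_middle (V : finType) (g : rel V) (u v : V) : Prop :=
  exists a b : V,
    [/\ uniq [:: u; v; a; b],
        [&& g u v, g u a, g u b, g v a & g v b] & ~~ g a b].

(* Paw on {a,b,c,d} with edges ab, bc, cd, bd (induced: ac, ad non-edges);
   side edges bc and bd.  By the symmetry c<->d it suffices that the edge is
   {b,c} for some such labelling; the edge is unordered, so both
   orientations (u,v) = (b,c) or (c,b) are allowed. *)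
Definition paw_side_oriented (V : finType) (g : rel V) (b c : V) : Prop :=
  exists a d : V,
    [/\ uniq [:: a; b; c; d],
        [&& g a b, g b c, g c d & g b d] & ~~ g a c && ~~ g a d].

Definition paw_side (V : finType) (g : rel V) (u v : V) : Prop :=
  paw_side_oriented g u v \/ paw_side_oriented g v u.

From mathcomp Require Import all_boot zify.
Set Implicit Arguments. Unset Strict Implicit. Unset Printing Implicit Defensive.

(* A simple graph is threshold iff it has no alternating 4-cycle: vertices x, a, z, b
   with edges xa, zb and non-edges xb, za (an induced 2K2, P4 or C4).  Threshold weights
   forbid one, because the two edges and the two non-edges involve the same four weights,
   yet the former sum above the threshold and the latter below it.  Conversely, without
   one, if a vertex of maximum degree misses some vertex y, then y is isolated; so every
   induced subgraph has an isolated or a dominating vertex, and weights are built by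
   peeling such vertices off.
   Deleting uv turns a diamond with middle edge uv into a C4 and a paw with side edge uv
   into a P4.  Conversely, an alternating 4-cycle of G - uv that is not one of G has uv
   as a non-edge, and the adjacencies among its other vertices then exhibit a diamond
   with middle edge uv, a paw with side edge uv, or an alternating 4-cycle of G. *)

Lemma sum_if_eq (T : finType) (X : {set T}) (y : T) (c : nat) (F : T -> nat) :
  \sum_(x in X) (if x == y then c else F x) = (y \in X) * c + \sum_(x in X :\ y) F x.
Proof.
have sum_off_y : \sum_(x in X :\ y) (if x == y then c else F x) = \sum_(x in X :\ y) F x.
  by apply: eq_bigr => x; rewrite !inE => /andP [/negbTE ->].
case: (boolP (y \in X)) => yX; first by rewrite (big_setD1 _ yX) eqxx sum_off_y mul1n.
rewrite mul0n add0n -sum_off_y; apply: eq_bigl => x; rewrite !inE.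
by case: eqP => // ->; rewrite (negbTE yX).
Qed.

Lemma leq_scaled_pad (n k s t : nat) :
  k <= n -> (n.+1 * s + k <= n.+1 * t + n) = (s <= t).
Proof. by move=> kn; apply/idP/idP; nia. Qed.

Lemma uniq4 (T : eqType) (a b c d : T) :
  uniq [:: a; b; c; d] = [&& a != b, a != c, a != d, b != c, b != d & c != d].
Proof. by rewrite /= !inE !negb_or !andbT !andbA. Qed.

Section AlternatingFourCycle.
Variables (V : finType) (h : rel V).

Definition alternating4 (x a z b : V) : Prop :=
  [/\ x != b, z != a & [&& h x a, h z b, ~~ h x b & ~~ h z a]].

Definition has_alternating4 : Prop := exists x a z b, alternating4 x a z b.

Lemma alternating4C x a z b : alternating4 x a z b -> alternating4 z b x a.
Proof. by case=> xb za /and4P [hxa hzb nhxb nhza]; split => //; apply/and4P. Qed.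

Hypotheses (hsym : symmetric h) (hirr : irreflexive h).

Lemma alternating4_uniq x a z b : alternating4 x a z b -> uniq [:: x; a; z; b].
Proof.
case=> xb za /and4P [hxa hzb _ nhza]; rewrite uniq4 xb (eq_sym a) za /=.
have xa : x != a by apply: contraTneq hxa => ->; rewrite hirr.
have zb : z != b by apply: contraTneq hzb => ->; rewrite hirr.
have xz : x != z by apply: contraTneq hxa => ->.
have ab : a != b by apply: contraNneq nhza => ->.
by rewrite xa xz ab zb.
Qed.

Lemma independentP (X : {set V}) :
  reflect (forall x y, x \in X -> y \in X -> ~~ h x y) (independent h X).
Proof.
apply: (iffP forall_inP) => [indep x y xX yX | indep x xX].
  by move/forall_inP: (indep x xX); apply.
by apply/forall_inP => y yX; apply: indep.
Qed.

Lemma independent2 p q : independent h [set p; q] = ~~ h p q.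
Proof.
apply/independentP/idP => [-> //|]; rewrite ?set21 ?set22 // => nhpq x y.
by move=> /set2P [] -> /set2P [] ->; rewrite ?hirr // hsym.
Qed.

Lemma threshold_adjE (l : V -> nat) (t : nat) :
  (forall X : {set V}, independent h X <-> \sum_(x in X) l x <= t) ->
  forall p q, p != q -> h p q = (t < l p + l q).
Proof.
move=> realized p q pq; have := realized [set p; q].
rewrite independent2 big_setU1 ?big_set1 ?inE // => realized2.
by rewrite ltnNge; apply/negb_inj; rewrite negbK; apply/idP/idP => /realized2.
Qed.

Lemma threshold_no_alternating4 : threshold h -> ~ has_alternating4.
Proof.
case=> l [t realized] [x [a [z [b alt]]]].
have := alternating4_uniq alt; rewrite uniq4 => /and4P [xa _ _ /and3P [_ _ zb]].
have [xb za /and4P] := alt; rewrite !(threshold_adjE realized) // -!leqNgt.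
case; lia.
Qed.

Definition realizes (S : {set V}) (l : V -> nat) (t : nat) : Prop :=
  forall X : {set V}, X \subset S -> independent h X = (\sum_(x in X) l x <= t).

Lemma realizes0 : realizes set0 (fun=> 0) 0.
Proof.
move=> X; rewrite subset0 => /eqP ->; rewrite big_set0 leqnn.
by apply/independentP => x y; rewrite inE.
Qed.

Lemma realizes_isolated (S : {set V}) (y : V) (l : V -> nat) (t : nat) :
  (forall z, z \in S -> ~~ h y z) ->
  realizes (S :\ y) l t -> realizes S (fun x => if x == y then 0 else l x) t.
Proof.
move=> isolated realized X XS; rewrite sum_if_eq muln0 add0n -realized ?setSD //.
apply/independentP/independentP => indep p q.
  by move=> /setD1P [_ pX] /setD1P [_ qX]; exact: indep.
move=> pX qX; case: (eqVneq p y) => [-> | py]; first by apply/isolated/(subsetP XS).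
case: (eqVneq q y) => [-> | qy]; first by rewrite hsym; apply/isolated/(subsetP XS).
by apply: indep; rewrite !inE ?py ?qy.
Qed.

(* The [+ 1] puts [y] together with any other vertex above the threshold; scaling by
   [#|V|.+1] makes these extra units irrelevant on subsets avoiding [y]. *)
Lemma realizes_dominating (S : {set V}) (y : V) (l : V -> nat) (t : nat) :
  (forall z, z \in S -> z != y -> h y z) ->
  realizes (S :\ y) l t ->
  realizes S (fun x => if x == y then #|V|.+1 * t + #|V| else #|V|.+1 * l x + 1)
             (#|V|.+1 * t + #|V|).
Proof.
move=> dominating realized X XS; rewrite sum_if_eq.
rewrite (eq_bigr (fun x => #|V|.+1 * l x + 1)) // big_split /= -big_distrr /= sum1_card.
case: (boolP (y \in X)) => yX; rewrite ?mul1n ?mul0n.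
  case: (set_0Vmem (X :\ y)) => [Xy0 | [z /setD1P [zy zX]]].
    rewrite Xy0 big_set0 cards0 muln0 !addn0 leqnn -(setD1K yX) Xy0 setU0.
    by apply/independentP => p q /set1P -> /set1P ->; rewrite hirr.
  have Xy_gt0 : 0 < #|X :\ y| by apply/card_gt0P; exists z; rewrite !inE zy.
  have /negbTE -> : ~~ independent h X.
    by apply: contraL (dominating z (subsetP XS z zX) zy) => /independentP; apply.
  lia.
have XSy : X \subset S :\ y by rewrite subsetD1 XS.
have -> : X :\ y = X by apply/setP => x; rewrite !inE; case: eqP => // ->; rewrite (negbTE yX).
by rewrite add0n leq_scaled_pad ?realized ?max_card.
Qed.

Section NoAlternating4.
Hypothesis no_alternating4 : ~ has_alternating4.

Lemma isolated_or_dominating (S : {set V}) (x0 : V) : x0 \in S ->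
  exists2 y, y \in S &
    (forall z, z \in S -> ~~ h y z) \/ (forall z, z \in S -> z != y -> h y z).
Proof.
move=> x0S; set N := fun w => [set z in S | h w z].
have [x xS degx_max] := arg_maxnP (fun w => #|N w|) x0S.
case: (boolP [forall z in S, (z != x) ==> h x z]) => [/forall_inP dom | ].
  by exists x => //; right => z zS; apply/implyP/dom.
rewrite negb_forall_in => /existsP [y /andP [yS]]; rewrite negb_imply => /andP [yx nhxy].
exists y => //; left => z zS; apply/negP => hyz.
have zx : z != x by apply: contraNneq nhxy => <-; rewrite hsym.
have Nx_sub_Nz : forall w, w != z -> h x w -> h z w.
  move=> w wz hxw; apply/negPn/negP => nhzw; apply: no_alternating4.
  by exists x, w, z, y; split; rewrite 1?eq_sym // hxw hsym hyz nhxy.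
have : #|y |: (N x :\ z)| <= #|N z :\ x|.
  apply/subset_leq_card/subsetP => w; rewrite !inE.
  case/orP => [/eqP -> | /and3P [wz wS hxw]]; first by rewrite yx yS hsym hyz.
  rewrite wS Nx_sub_Nz // !andbT; apply: contraTneq hxw => ->; by rewrite hirr.
rewrite cardsU1 !inE (negbTE nhxy) !andbF /=.
have := degx_max z zS; rewrite (cardsD1 z (N x)) (cardsD1 x (N z)) !inE.
by rewrite zS (xS : x \in S) hsym /=; lia.
Qed.

Lemma realizes_exists (S : {set V}) : exists l t, realizes S l t.
Proof.
move: {2}#|S| (erefl #|S|) => n; elim: n S => [|n IH] S cardS.
  by move/eqP: cardS; rewrite cards_eq0 => /eqP ->; exists (fun=> 0), 0; exact: realizes0.
have [x0 x0S] : exists x0, x0 \in S by apply/card_gt0P; rewrite cardS.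
have [y yS [isolated | dominating]] := isolated_or_dominating x0S;
  have [l [t realized]] : exists l t, realizes (S :\ y) l t
    by apply: IH; move: cardS; rewrite (cardsD1 y) yS => -[].
  by do 2 eexists; exact: realizes_isolated realized.
by do 2 eexists; exact: realizes_dominating realized.
Qed.

Lemma no_alternating4_threshold : threshold h.
Proof.
have [l [t realized]] := realizes_exists [set: V].
by exists l, t => X; rewrite realized ?subsetT.
Qed.

End NoAlternating4.

Lemma threshold_alternating4 : threshold h <-> ~ has_alternating4.
Proof. by split; [exact: threshold_no_alternating4 | exact: no_alternating4_threshold]. Qed.

End AlternatingFourCycle.

Section DiamondPaw.
Variables (V : finType) (g : rel V).
Hypothesis gsym : symmetric g.

Lemma diamond_middleC u v : diamond_middle g u v -> diamond_middle g v u.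
Proof.
case=> a [b [uniq_uvab /and5P [guv gua gub gva gvb] ngab]]; exists a, b; split => //.
  by move: uniq_uvab; rewrite !uniq4 (eq_sym u v) => /and3P [-> -> /and4P [-> -> -> ->]].
by rewrite gsym guv gva gvb gua gub.
Qed.

Lemma diamond_paw_or_alternating4 x a z b :
  uniq [:: x; a; z; b] -> g x a -> g z b -> g x b -> ~~ g z a ->
  [\/ diamond_middle g x b, paw_side g x b | alternating4 g x a b z].
Proof.
rewrite uniq4 => /and4P [xa xz xb /and3P [az ab zb]] gxa gzb gxb ngza.
have ngaz : ~~ g a z by rewrite gsym.
case: (boolP (g x z)) => gxz; case: (boolP (g a b)) => gab.
- constructor 1; exists a, z; split => //.
    by rewrite uniq4 xb xa xz (eq_sym b a) ab (eq_sym b z) zb az.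
  by rewrite gxb gxa gxz (gsym b a) gab (gsym b z) gzb.
- constructor 2; left; exists a, z; split.
  + by rewrite uniq4 (eq_sym a x) xa ab az xb xz (eq_sym b z) zb.
  + by rewrite (gsym a x) gxa gxb (gsym b z) gzb gxz.
  + by rewrite gab ngaz.
- constructor 2; right; exists z, a; split.
  + by rewrite uniq4 zb (eq_sym z x) xz (eq_sym z a) az (eq_sym b x) xb (eq_sym b a) ab xa.
  + by rewrite gzb (gsym b x) gxb gxa (gsym b a) gab.
  + by rewrite (gsym z x) gxz ngza.
- constructor 3; split; first exact: xz; first by rewrite eq_sym.
  by rewrite gxa (gsym b z) gzb gxz (gsym b a) gab.
Qed.

End DiamondPaw.

Section RemoveEdge.
Variables (V : finType) (g : rel V) (u v : V).
Local Notation h := (remove_edge g u v).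

Lemma remove_edge_sub x y : h x y -> g x y.
Proof. by case/andP. Qed.

Lemma remove_edge_uv : ~~ h u v.
Proof. by rewrite /remove_edge !eqxx andbF. Qed.

Lemma remove_edge_vu : ~~ h v u.
Proof. by rewrite /remove_edge !eqxx orbT andbF. Qed.

Lemma remove_edge_l x y : x != u -> x != v -> h x y = g x y.
Proof. by move=> /negbTE xu /negbTE xv; rewrite /remove_edge xu xv andbT. Qed.

Lemma remove_edge_r x y : y != u -> y != v -> h x y = g x y.
Proof. by move=> /negbTE yu /negbTE yv; rewrite /remove_edge yu yv !andbF andbT. Qed.

Lemma remove_edge_dropped x y : g x y -> ~~ h x y -> (x = u /\ y = v) \/ (x = v /\ y = u).
Proof.
rewrite /remove_edge => -> /=; rewrite negbK.
by case/orP => /andP [/eqP -> /eqP ->]; [left | right].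
Qed.

Lemma simple_graph_remove_edge : simple_graph g -> simple_graph h.
Proof.
case=> gsym girr; split => [x y | x]; last by rewrite /remove_edge girr.
rewrite /remove_edge gsym orbC.
by congr (_ && ~~ (_ || _)); apply: andbC.
Qed.

Hypotheses (gsym : symmetric g) (girr : irreflexive g).

Lemma diamond_middle_alternating4 : diamond_middle g u v -> has_alternating4 h.
Proof.
case=> a [b [+ /and5P [_ gua _ _ gvb] ngab]].
rewrite uniq4 => /and3P [uv ua /and4P [ub va vb ab]].
exists u, a, b, v; split => //; first by rewrite eq_sym.
rewrite remove_edge_r 1?eq_sym // remove_edge_l 1?eq_sym // gua gsym gvb remove_edge_uv.
by apply: contra ngab; rewrite gsym => /remove_edge_sub.
Qed.

Lemma paw_side_alternating4 : paw_side g u v -> has_alternating4 h.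
Proof.
case=> -[a [d [+ /and4P [gab _ gcd _] /andP [_ ngad]]]];
  rewrite uniq4 => /and3P [ab ac /and4P [ad bc bd cd]].
- exists a, u, v, d; split => //; first by rewrite eq_sym.
  rewrite remove_edge_l // remove_edge_r 1?eq_sym // gab gcd remove_edge_vu andbT.
  by apply: contra ngad => /remove_edge_sub.
- exists a, v, u, d; split => //; first by rewrite eq_sym.
  rewrite remove_edge_l 1?(eq_sym v) // remove_edge_r 1?eq_sym // gab gcd remove_edge_uv andbT.
  by apply: contra ngad => /remove_edge_sub.
Qed.

Lemma alternating4_remove_edge x a z b : g u v -> alternating4 h x a z b ->
  [\/ has_alternating4 g, diamond_middle g u v | paw_side g u v].
Proof.
move=> guv; wlog gxb : x a z b / g x b.
  move=> wlog_gxb alt; have [xb za /and4P [hxa hzb nhxb nhza]] := alt.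
  case: (boolP (g x b)) => [gxb|ngxb]; first exact: wlog_gxb gxb alt.
  case: (boolP (g z a)) => [gza|ngza]; first exact: wlog_gxb _ _ _ _ gza (alternating4C alt).
  constructor 1; exists x, a, z, b; split => //.
  by rewrite (remove_edge_sub hxa) (remove_edge_sub hzb) ngxb ngza.
move=> alt; have [_ hirr] := simple_graph_remove_edge (conj gsym girr).
have uniq_xazb := alternating4_uniq hirr alt.
have [xb za /and4P [hxa hzb nhxb nhza]] := alt.
have dropped := remove_edge_dropped gxb nhxb.
have [zu zv] : z != u /\ z != v.
  move: uniq_xazb; rewrite uniq4 => /and3P [_ xz /and4P [_ _ _ zb]].
  by case: dropped => -[<- <-]; split; rewrite // eq_sym.
move: nhza; rewrite remove_edge_l // => ngza.
have := diamond_paw_or_alternating4 gsym uniq_xazb (remove_edge_sub hxa) (remove_edge_sub hzb).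
case/(_ gxb ngza) => [diamond | paw | alt_g]; last by constructor 1; exists x, a, b, z.
  by constructor 2; case: dropped diamond => -[-> ->] // /(diamond_middleC gsym).
by constructor 3; case: dropped paw => -[-> ->] // /or_comm.
Qed.

End RemoveEdge.

Theorem lemma4p3 (V : finType) (g : rel V) (u v : V) :
  simple_graph g -> threshold g -> g u v ->
  (threshold (remove_edge g u v) <-> ~ diamond_middle g u v /\ ~ paw_side g u v).
Proof.
move=> simple_g g_threshold guv; have [gsym girr] := simple_g.
have [hsym hirr] := simple_graph_remove_edge u v simple_g.
rewrite threshold_alternating4 //.
split=> [no_alternating4 | [no_diamond no_paw] [x [a [z [b alt]]]]].
  by split=> [/(diamond_middle_alternating4 gsym) | /paw_side_alternating4].
have := threshold_no_alternating4 gsym girr g_threshold.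
by case: (alternating4_remove_edge gsym girr guv alt).
Qed.
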